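(* Let $\mathcal{M}=(E,\mathcal{B})$ be a matroid. If $\operatorname{rk}(\mathcal{M})\le 2$ or $|E|\le 5$, then the base configuration $V_{\mathcal{M}}$ is $2$-level.
   Context: The base configuration of a matroid $\mathcal{M}=(E,\mathcal{B})$ is $V_{\mathcal{M}}=\{\mathbf{1}_B:B\in\mathcal{B}\}\subset\mathbb{R}^E$. For a finite point set $V$ and an affine function $\ell$ nonnegative on $V$, $\{v\in V:\ell(v)=0\}$ is a face; inclusion-maximal faces different from $V$ are facets and the corresponding $\ell$ facet-defining. $V$ is $k$-level if every facet-defining affine function takes at most $k$ distinct values on $V$. *)

From HB Require Import structures.
From mathcomp Require Import all_boot all_order all_algebra.
From mathcomp Require Import reals.
Set Implicit Arguments. Unset Strict Implicit. Unset Printing Implicit Defensive.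
Import Order.TTheory GRing.Theory Num.Theory.
Local Open Scope ring_scope.

Definition matroid_bases (E : finType) (BB : {set {set E}}) : Prop :=
  BB != set0 /\
  forall B1 B2, B1 \in BB -> B2 \in BB -> forall x, x \in B1 :\: B2 ->
    exists2 y, y \in B2 :\: B1 & y |: (B1 :\ x) \in BB.

(* rank of the matroid: common size of the bases *)
Definition mrank (E : finType) (BB : {set {set E}}) : nat :=
  \max_(B in BB) #|B|.

Definition indicator (R : realType) (E : finType) (B : {set E}) : E -> R :=
  fun e => (e \in B)%:R.

Definition base_config (R : realType) (E : finType) (BB : {set {set E}})
  : (E -> R) -> Prop :=
  fun v => exists2 B, B \in BB & v = indicator R B.

Definition affine_eval (R : realType) (E : finType) (a : E -> R) (b : R)
  (x : E -> R) : R := \sum_(e : E) a e * x e + b.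

Definition nonneg_on (R : realType) (E : finType) (V : (E -> R) -> Prop)
  (a : E -> R) (b : R) : Prop :=
  forall v, V v -> 0 <= affine_eval a b v.

Definition zero_set (R : realType) (E : finType) (V : (E -> R) -> Prop)
  (a : E -> R) (b : R) : (E -> R) -> Prop :=
  fun v => V v /\ affine_eval a b v = 0.

Definition same_set (R : realType) (E : finType) (F G : (E -> R) -> Prop) :=
  forall v, F v <-> G v.

Definition subset_of (R : realType) (E : finType) (F G : (E -> R) -> Prop) :=
  forall v, F v -> G v.

Definition is_face (R : realType) (E : finType) (V F : (E -> R) -> Prop) : Prop :=
  exists a b, nonneg_on V a b /\ same_set F (zero_set V a b).

Definition is_facet (R : realType) (E : finType) (V F : (E -> R) -> Prop) : Prop :=
  is_face V F /\ ~ same_set F V /\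
  forall G, is_face V G -> ~ same_set G V -> subset_of F G -> subset_of G F.

Definition facet_defining (R : realType) (E : finType) (V : (E -> R) -> Prop)
  (a : E -> R) (b : R) : Prop :=
  nonneg_on V a b /\ is_facet V (zero_set V a b).

Definition k_level (R : realType) (E : finType) (k : nat)
  (V : (E -> R) -> Prop) : Prop :=
  forall a b, facet_defining V a b ->
    exists s : seq R, (size s <= k)%N /\
      forall v, V v -> affine_eval a b v \in s.

From mathcomp Require Import all_boot all_order all_algebra.
From mathcomp Require Import reals.
From mathcomp Require Import zify ring lra.
Set Implicit Arguments. Unset Strict Implicit. Unset Printing Implicit Defensive.
Import Order.TTheory GRing.Theory Num.Theory.
Local Open Scope ring_scope.

(* Let l = (a, b) be facet-defining and B0 a base of minimal a-weight.  The
   greedy exchange argument shows that B0 meets every sublevel set S of a in at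
   least as many elements as any other base, so raising the values of a level by
   level writes l(B) - l(B0) as a nonnegative combination of the deficits
   |B0 :&: S| - |B :&: S|.  Under either hypothesis, every deficit is a
   nonnegative combination of affine functions taking only the values 0 and 1 on
   the bases: the deficit itself, the coordinates x_e, or the 1 - x_e.  Each of
   them vanishes on the facet, hence by maximality of the facet it vanishes
   either everywhere or exactly on the facet.  So l - l(B0) is constant off the
   facet, and l takes at most two values on the bases. *)

Section SetExchange.
Variable E : finType.
Implicit Types (A B S : {set E}) (x y : E).

Lemma card_exch B x y : x \in B -> y \notin B -> #|y |: (B :\ x)| = #|B|.
Proof.
move=> xB yB; rewrite cardsU1 (cardsD1 x B) xB in_setD1 (negbTE yB) andbF.
by rewrite add1n.
Qed.

Lemma card_setI_exch S B x y : x \in B -> y \notin B ->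
  (#|(y |: (B :\ x)) :&: S| + (x \in S) = #|B :&: S| + (y \in S))%N.
Proof.
move=> xB yB; have yx : y != x by apply: contraNneq yB => ->.
rewrite setIUl (cardsD1 x (B :&: S)) inE xB /= setIDAC.
have -> : [set y] :&: S = if y \in S then [set y] else set0.
  apply/setP=> z; case: (boolP (y \in S)) => yS; rewrite !inE.
    by case: eqP => // ->.
  by case: eqP => // ->; rewrite (negbTE yS).
case: (boolP (y \in S)) => yS; last by rewrite set0U; lia.
rewrite cardsU1 !inE (negbTE yx) (negbTE yB) /=; lia.
Qed.

Lemma setD_exch B B0 x y : x \in B :\: B0 -> y \in B0 ->
  (y |: (B :\ x)) :\: B0 = (B :\: B0) :\ x.
Proof.
move=> xD yB0; apply/setP=> z; rewrite !inE.
by case: (z =P y) => [->|_]; rewrite ?yB0 ?andbF //= andbCA.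
Qed.

Lemma card_setD_exch B B0 x y : x \in B :\: B0 -> y \in B0 ->
  (#|(y |: (B :\ x)) :\: B0| < #|B :\: B0|)%N.
Proof. by move=> xD yB0; rewrite setD_exch // (cardsD1 x (B :\: B0)) xD. Qed.

End SetExchange.

Section MatroidBases.
Variables (R : realType) (E : finType) (BB : {set {set E}}).
Hypothesis bases_exch : forall B1 B2, B1 \in BB -> B2 \in BB ->
  forall x, x \in B1 :\: B2 -> exists2 y, y \in B2 :\: B1 & y |: (B1 :\ x) \in BB.
Implicit Types (B : {set E}) (a : E -> R).

Lemma bases_card_le B1 B2 : B1 \in BB -> B2 \in BB -> (#|B2| <= #|B1|)%N.
Proof.
move=> B1in; elim: {B2}_.+1 {-2}B2 (ltnSn #|B2 :\: B1|) => // n IH B2 lt_n B2in.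
have [/eqP|/set0Pn[x xD]] := eqVneq (B2 :\: B1) set0.
  by rewrite setD_eq0 => /subset_leq_card.
have [y yD B2'in] := bases_exch B2in B1in xD.
move: (xD) yD; rewrite !inE => /andP[_ xB2] /andP[yB2 yB1].
rewrite -(card_exch xB2 yB2); apply: IH B2'in.
by have := card_setD_exch xD yB1; lia.
Qed.

Definition weight (a : E -> R) (B : {set E}) : R := \sum_(e in B) a e.

Lemma weight_exch a B x y : x \in B -> y \notin B ->
  weight a (y |: (B :\ x)) = weight a B - a x + a y.
Proof.
move=> xB yB; rewrite /weight big_setU1 /=; last by rewrite !inE (negbTE yB) andbF.
rewrite (big_setD1 x xB) /=; lra.
Qed.

Definition sublevel (a : E -> R) (t : R) : {set E} := [set e | a e <= t].

Section MinWeightBase.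
Variables (a : E -> R) (B0 : {set E}).
Hypothesis B0in : B0 \in BB.
Hypothesis B0_min : forall B, B \in BB -> weight a B0 <= weight a B.

Lemma min_base_sublevel_step t B : B \in BB -> B :\: B0 != set0 ->
  exists2 B', B' \in BB & (#|B' :\: B0| < #|B :\: B0|)%N /\
    (#|B :&: sublevel a t| <= #|B' :&: sublevel a t|)%N.
Proof.
set S := sublevel a t => Bin /set0Pn[x0 x0D].
suff [x xD yS] : exists2 x, x \in B :\: B0 & forall y, y \in B0 :\: B ->
    y |: (B :\ x) \in BB -> x \in S -> y \in S.
  have [y yD B'in] := bases_exch Bin B0in xD; exists (y |: (B :\ x)) => //.
  have le_xy := yS y yD B'in.
  move: (xD) (yD); rewrite !inE => /andP[_ xB] /andP[yB yB0].
  split; first exact: card_setD_exch.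
  move: (card_setI_exch S xB yB); case: (x \in S) le_xy => [/(_ isT) ->|_]; first lia.
  by case: (y \in S); lia.
have [/exists_inP[x xD xS]|/exists_inPn allS] := boolP [exists x in B :\: B0, x \notin S].
  by exists x => // y _ _ /(negP xS).
exists x0 => // y yD _ _; apply: contraT => yS.
(* every element of B :\: B0 lies in S, so trading y out of B0 would lower its weight *)
have [w wD B0'in] := bases_exch B0in Bin yD.
have wS := negbNE (allS w wD).
have := B0_min B0'in; rewrite weight_exch; last by move: wD; rewrite inE => /andP[].
  by move: wS yS; rewrite !inE -ltNge; lra.
by move: yD; rewrite inE => /andP[].
Qed.

Lemma min_base_sublevel t B : B \in BB ->
  (#|B :&: sublevel a t| <= #|B0 :&: sublevel a t|)%N.
Proof.
elim: {B}_.+1 {-2}B (ltnSn #|B :\: B0|) => // n IH B lt_n Bin.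
have [/eqP|ne] := eqVneq (B :\: B0) set0.
  by rewrite setD_eq0 => sub; apply/subset_leq_card/setSI.
have [B' B'in [lt_B' le_B']] := min_base_sublevel_step t Bin ne.
by apply: leq_trans le_B' (IH _ (leq_trans lt_B' lt_n) B'in).
Qed.

End MinWeightBase.
End MatroidBases.

Section ZeroOneCone.
Variables (R : realType) (E : finType) (BB : {set {set E}}).
Implicit Types (B S : {set E}) (f g : {set E} -> R).

Lemma sum_indicator_setI B S : \sum_(e in B) indicator R S e = #|B :&: S|%:R.
Proof.
rewrite -sum1_card natr_sum [LHS]big_mkcond [RHS]big_mkcond /=.
by apply: eq_bigr => e _; rewrite /indicator inE; case: (e \in B); case: (e \in S).
Qed.

Lemma affine_eval_indicator (w : E -> R) c B :
  affine_eval w c (indicator R B) = \sum_(e in B) w e + c.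
Proof.
rewrite /affine_eval [in RHS]big_mkcond /=; congr (_ + _).
by apply: eq_bigr => e _; rewrite /indicator; case: (e \in B); rewrite ?mulr1 ?mulr0.
Qed.

Definition affine_on_bases f :=
  exists w c, {in BB, forall B, f B = affine_eval w c (indicator R B)}.

Lemma affine_on_bases_card S k c :
  affine_on_bases (fun B => k * #|B :&: S|%:R + c).
Proof.
exists (fun e => k * indicator R S e), c => B _.
by rewrite affine_eval_indicator -mulr_sumr sum_indicator_setI.
Qed.

(* The cone spanned by the affine functions taking only the values 0 and 1 on
   the bases; its members are only ever evaluated at bases. *)
Inductive cone01 : ({set E} -> R) -> Prop :=
| cone01_gen f : affine_on_bases f -> {in BB, forall B, f B = 0 \/ f B = 1} ->
    cone01 f
| cone01_scale k f : 0 <= k -> cone01 f -> cone01 (fun B => k * f B)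
| cone01_add f g : cone01 f -> cone01 g -> cone01 (fun B => f B + g B)
| cone01_eq f g : cone01 f -> {in BB, f =1 g} -> cone01 g.

Lemma cone01_ge0 f : cone01 f -> {in BB, forall B, 0 <= f B}.
Proof.
elim=> {f} [f _ f01 B /f01[]->|k f k0 _ IH B /IH|f g _ IHf _ IHg B Bin|f g _ IH fg B Bin].
- by [].
- by rewrite ler01.
- exact: mulr_ge0.
- exact: addr_ge0 (IHf B Bin) (IHg B Bin).
- by rewrite -fg // IH.
Qed.

Lemma cone01_card S k c :
  {in BB, forall B, k * #|B :&: S|%:R + c = 0 \/ k * #|B :&: S|%:R + c = 1} ->
  cone01 (fun B => k * #|B :&: S|%:R + c).
Proof. exact/cone01_gen/affine_on_bases_card. Qed.

Lemma cone01_0 : cone01 (fun=> 0).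
Proof.
by apply: cone01_eq (@cone01_card set0 0 0 _) _ => B _; rewrite mul0r addr0 //; left.
Qed.

Lemma cone01_sum (r : seq E) (P : pred E) (F : E -> {set E} -> R) :
  (forall e, cone01 (F e)) -> cone01 (fun B => \sum_(e <- r | P e) F e B).
Proof.
move=> coneF; elim: r => [|e r IH].
  by apply: cone01_eq cone01_0 _ => B _; rewrite big_nil.
case Pe: (P e).
  by apply: cone01_eq (cone01_add (coneF e) IH) _ => B _; rewrite big_cons Pe.
by apply: cone01_eq IH _ => B _; rewrite big_cons Pe.
Qed.

Lemma card_setI1 B e : #|B :&: [set e]| = nat_of_bool (e \in B).
Proof.
have [eB|eB] := boolP (e \in B).
  suff -> : B :&: [set e] = [set e] by rewrite cards1.
  by apply/setP => x; rewrite !inE; case: eqP => [->|]; rewrite ?andbT ?andbF.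
suff -> : B :&: [set e] = set0 by rewrite cards0.
by apply/setP => x; rewrite !inE; case: eqP => [->|]; rewrite ?andbF ?(negbTE eB).
Qed.

Lemma cone01_mem e : cone01 (fun B => (e \in B)%:R).
Proof.
apply: cone01_eq (@cone01_card [set e] 1 0 _) _ => B _; rewrite card_setI1 mul1r addr0.
  by case: (e \in B); [right|left].
by [].
Qed.

Lemma cone01_nmem e : cone01 (fun B => 1 - (e \in B)%:R).
Proof.
apply: cone01_eq (@cone01_card [set e] (-1) 1 _) _ => B _;
  rewrite card_setI1 mulN1r addrC.
  by case: (e \in B); rewrite ?subrr ?subr0; [left|right].
by [].
Qed.

End ZeroOneCone.

Section Facet.
Variables (R : realType) (E : finType) (BB : {set {set E}}) (a : E -> R) (b : R).
Hypothesis facet : facet_defining (@base_config R E BB) a b.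
Implicit Types (B : {set E}) (f g : {set E} -> R).

Let ell B := affine_eval a b (indicator R B).

Lemma facet_absorb f : affine_on_bases BB f -> {in BB, forall B, 0 <= f B} ->
    {in BB, forall B, ell B = 0 -> f B = 0} ->
  {in BB, forall B, f B = 0} \/ {in BB, forall B, f B = 0 -> ell B = 0}.
Proof.
move=> [w [c fwc]] f_ge0 f_ell.
have [/forall_inP f0|/forall_inPn[B1 B1in f1]] := boolP [forall B in BB, f B == 0].
  by left=> B /f0/eqP.
right; case: facet => _ [_ [_ maximal]]; set V := @base_config R E BB.
have face : is_face V (zero_set V w c).
  by exists w, c; split=> // v [B Bin ->]; rewrite -fwc //; apply: f_ge0.
have proper : ~ same_set (zero_set V w c) V.
  move=> /(_ (indicator R B1)) [_ /(_ (ex_intro2 _ _ B1 B1in erefl))[_]].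
  by rewrite -fwc // => /eqP; rewrite (negbTE f1).
have sub : subset_of (zero_set V a b) (zero_set V w c).
  move=> v [[B Bin ->] ellB]; split; first by exists B.
  by rewrite -fwc // f_ell.
move=> B Bin fB; have [] // := maximal _ face proper sub (indicator R B).
by split; [exists B | rewrite -fwc].
Qed.

Lemma cone01_const_off_facet f : cone01 BB f ->
    {in BB, forall B, ell B = 0 -> f B = 0} ->
  exists D, {in BB, forall B, ell B <> 0 -> f B = D}.
Proof.
elim=> {f} [f f_aff f01|k f k_ge0 cf IH|f g cf IHf cg IHg|f g cf IH fg] f_ell.
- have [f0|f_facet] := facet_absorb f_aff (cone01_ge0 (cone01_gen f_aff f01)) f_ell.
    by exists 0 => B Bin _; apply: f0.
  by exists 1 => B Bin ellB; case: (f01 B Bin) => // /(f_facet B Bin)/ellB.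
- have [->|k_neq0] := eqVneq k 0; first by exists 0 => B _ _; rewrite mul0r.
  have [D fD] : exists D, {in BB, forall B, ell B <> 0 -> f B = D}.
    apply: IH => B Bin ellB; apply/eqP.
    by have /eqP := f_ell B Bin ellB; rewrite mulf_eq0 (negbTE k_neq0).
  by exists (k * D) => B Bin ellB; rewrite fD.
- have f_ell' : {in BB, forall B, ell B = 0 -> f B = 0}.
    move=> B Bin ellB; have := f_ell B Bin ellB.
    by have := cone01_ge0 cf Bin; have := cone01_ge0 cg Bin; lra.
  have [D1 fD1] := IHf f_ell'.
  have [D2 gD2] : exists D, {in BB, forall B, ell B <> 0 -> g B = D}.
    by apply: IHg => B Bin ellB; have := f_ell B Bin ellB; rewrite f_ell' ?add0r.
  by exists (D1 + D2) => B Bin ellB; rewrite fD1 ?gD2.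
- have [D fD] := IH (fun B Bin ellB => etrans (fg B Bin) (f_ell B Bin ellB)).
  by exists D => B Bin ellB; rewrite -fg ?fD.
Qed.

End Facet.

Section LayerDecomposition.
Variables (R : realType) (E : finType).
Implicit Types (a : E -> R) (B S : {set E}).

Lemma sublevel_max a t s :
  sublevel (fun e => Num.max (a e) t) s = if t <= s then sublevel a s else set0.
Proof.
by apply/setP => e; rewrite !inE ge_max andbC; case: (t <= s); rewrite ?inE.
Qed.

Lemma weight_max_sublevel a m t B : m < t -> (forall e, a e < t -> a e = m) ->
  weight (fun e => Num.max (a e) t) B = weight a B + (t - m) * #|B :&: sublevel a m|%:R.
Proof.
move=> lt_mt low; rewrite -sum_indicator_setI mulr_sumr -big_split /=.
apply: eq_bigr => e _; rewrite /indicator inE.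
have [lt_et|le_te] := ltP (a e) t.
  by rewrite low // lexx mulr1; lra.
by rewrite leNgt (lt_le_trans lt_mt le_te) mulr0 addr0.
Qed.

Definition nonminimal a := [set e | [exists f, a f < a e]].

Lemma nonminimal_max a e0 f0 : a f0 < a e0 ->
  nonminimal (fun e => Num.max (a e) (a e0)) \subset nonminimal a :\ e0.
Proof.
move=> lt_f0e0; apply/subsetP => e; rewrite !inE => /existsP[f lt_fe].
have : a e0 < Num.max (a e) (a e0).
  by apply: le_lt_trans lt_fe; rewrite le_max lexx orbT.
rewrite lt_max ltxx orbF => lt_e0e; apply/andP; split.
  by apply: contraTneq lt_e0e => ->; rewrite ltxx.
by apply/existsP; exists f0; apply: lt_trans lt_e0e.
Qed.

Section FixedBase.
Variables (BB : {set {set E}}) (B0 : {set E}).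
Hypothesis card_bases : {in BB, forall B, #|B| = #|B0|}.

Lemma weight_nonminimal0 a : nonminimal a = set0 ->
  {in BB, forall B, weight a B = weight a B0}.
Proof.
move=> /setP nonmin0 B Bin; case: (pickP (@predT E)) => [e0 _|E0]; last first.
  by rewrite /weight !big1 // => e; have := E0 e.
have const e : a e = a e0.
  apply/eqP; rewrite eq_le !leNgt.
  by have := nonmin0 e; have := nonmin0 e0; rewrite !inE => /existsPn-> /existsPn->.
have weight_card A : weight a A = a e0 *+ #|A|.
  by rewrite /weight -sumr_const; apply: eq_bigr => e _; apply: const.
by rewrite !weight_card card_bases.
Qed.

Definition deficit S B : R := #|B0 :&: S|%:R - #|B :&: S|%:R.

Lemma deficit_set0 B : deficit set0 B = 0.
Proof. by rewrite /deficit !setI0 subrr. Qed.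

Lemma deficit_cone01_gap1 S : {in BB, forall B, #|B :&: S| <= #|B0 :&: S|}%N ->
    {in BB, forall B, #|B0 :&: S| <= #|B :&: S|.+1}%N ->
  cone01 BB (deficit S).
Proof.
move=> le_B0 le_B; apply: cone01_eq (@cone01_card _ _ _ S (-1) #|B0 :&: S|%:R _) _.
  move=> B Bin; have := le_B0 B Bin; have := le_B B Bin.
  rewrite mulN1r addrC; set k := #|B :&: S|; set m := #|B0 :&: S| => h1 h2.
  have [->|->] : m = k \/ m = k.+1 by lia.
    by left; rewrite subrr.
  by right; rewrite -addn1 natrD addrAC subrr add0r.
by move=> B _; rewrite /deficit mulN1r addrC.
Qed.

Lemma deficit_cone01_full_base S : #|B0 :&: S| = #|B0| -> cone01 BB (deficit S).
Proof.
move=> full.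
apply: cone01_eq (cone01_sum (index_enum E) (mem (~: S)) (cone01_mem R BB)) _.
move=> B Bin; rewrite /deficit full -(card_bases Bin) -(cardsID S B).
by rewrite natrD addrAC subrr add0r sum_indicator_setI setIC setDE.
Qed.

Lemma deficit_cone01_full_set S : #|B0 :&: S| = #|S| -> cone01 BB (deficit S).
Proof.
move=> full; apply: cone01_eq (cone01_sum (index_enum E) (mem S) (cone01_nmem R BB)) _.
by move=> B _; rewrite /deficit full sumrB sumr_const sum_indicator_setI setIC.
Qed.

(* With rank at least 3 and at most 5 elements, at most 2 elements of S lie
   outside a base. *)
Lemma trace_gap_full S B1 : B1 \in BB -> (#|B0| <= 2 \/ #|E| <= 5)%N ->
  (#|B1 :&: S|.+2 <= #|B0 :&: S|)%N -> #|B0 :&: S| = #|B0| \/ #|B0 :&: S| = #|S|.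
Proof.
move=> B1in small gap.
have le_B0 : (#|B0 :&: S| <= #|B0|)%N by apply/subset_leq_card/subsetIl.
have le_S : (#|B0 :&: S| <= #|S|)%N by apply/subset_leq_card/subsetIr.
have [le_B0_2|gt_B0_2] := leqP #|B0| 2; first by left; lia.
case: small => [?|le_E5]; first lia.
have le_SB1 : (#|S :\: B1| <= #|~: B1|)%N.
  by apply/subset_leq_card/subsetP => e; rewrite !inE => /andP[].
have := cardsID B1 S; have := cardsC B1; rewrite card_bases // setIC; right; lia.
Qed.

Lemma deficit_cone01 S : {in BB, forall B, #|B :&: S| <= #|B0 :&: S|}%N ->
  (#|B0| <= 2 \/ #|E| <= 5)%N -> cone01 BB (deficit S).
Proof.
move=> le_B0 small.
have [/forall_inP gap1|/forall_inPn[B1 B1in]] :=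
  boolP [forall B in BB, #|B0 :&: S| <= #|B :&: S|.+1]%N.
  exact: deficit_cone01_gap1.
rewrite -ltnNge => /(trace_gap_full B1in small)[].
  exact: deficit_cone01_full_base.
exact: deficit_cone01_full_set.
Qed.

Lemma weight_diff_cone01 a : (forall t, cone01 BB (deficit (sublevel a t))) ->
  cone01 BB (fun B => weight a B - weight a B0).
Proof.
elim: {a}_.+1 {-2}a (ltnSn #|nonminimal a|) => // n IH a lt_n cone_a.
have [nonmin0|/set0Pn[e1]] := eqVneq (nonminimal a) set0.
  by apply: cone01_eq (cone01_0 _ _) _ => B Bin; rewrite weight_nonminimal0 ?subrr.
rewrite inE => /existsP[f1 lt_f1e1].
have [em min_em] : exists em, forall e, a em <= a e.
  by exists [arg min_(e < e1) a e]%O; case: arg_minP => // e _ e_min f; apply: e_min.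
have lt_em_e1 : a em < a e1 := le_lt_trans (min_em f1) lt_f1e1.
have [et [lt_em_et min_et]] : exists et, a em < a et /\
    forall e, a em < a e -> a et <= a e.
  by exists [arg min_(e < e1 | a em < a e) a e]%O; case: arg_minP.
have low e : a e < a et -> a e = a em.
  move=> lt_et; apply/le_anti; rewrite min_em andbT leNgt.
  by apply: contraTN lt_et => /min_et; rewrite -leNgt.
apply: cone01_eq (cone01_add (IH (fun e => Num.max (a e) (a et)) _ _)
  (cone01_scale (k := a et - a em) _ (cone_a (a em)))) _.
- have := subset_leq_card (nonminimal_max lt_em_et).
  have et_nonmin : et \in nonminimal a by rewrite inE; apply/existsP; exists em.
  by rewrite (cardsD1 et (nonminimal a)) et_nonmin in lt_n; lia.
- move=> s; rewrite sublevel_max; case: ifP => _; first exact: cone_a.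
  by apply: cone01_eq (cone01_0 _ _) _ => B _; rewrite deficit_set0.
- by rewrite subr_ge0 ltW.
- by move=> B _; rewrite /deficit !(weight_max_sublevel _ lt_em_et low); ring.
Qed.

End FixedBase.
End LayerDecomposition.

Theorem proposition3p1 (R : realType) (E : finType) (BB : {set {set E}}) :
  matroid_bases BB ->
  (mrank BB <= 2)%N \/ (#|E| <= 5)%N ->
  k_level 2 (@base_config R E BB).
Proof.
move=> [/set0Pn[B1 B1in] exch] small a b facet.
have [B0 B0in B0_min] : exists2 B0, B0 \in BB &
    forall B, B \in BB -> weight a B0 <= weight a B.
  by exists [arg min_(B < B1 in BB) weight a B]%O; case: arg_minP.
have card_bases : {in BB, forall B : {set E}, #|B| = #|B0|}.
  by move=> B Bin; apply/eqP; rewrite eqn_leq !(bases_card_le exch).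
have small_B0 : (#|B0| <= 2 \/ #|E| <= 5)%N.
  case: small => [le_rk|]; [left|by right].
  apply: leq_trans le_rk; exact: (@leq_bigmax_cond _ (mem BB) (fun B => #|B|) _ B0in).
have cone_diff := weight_diff_cone01 card_bases (fun t =>
  deficit_cone01 R card_bases (min_base_sublevel exch B0in B0_min t) small_B0).
pose ell B := affine_eval a b (indicator R B).
have ell_diff B : ell B = ell B0 + (weight a B - weight a B0).
  by rewrite /ell !affine_eval_indicator /weight; ring.
have ell_B0_ge0 : 0 <= ell B0 by apply: facet.1; exists B0.
have diff0 : {in BB, forall B, ell B = 0 -> weight a B - weight a B0 = 0}.
  move=> B Bin ellB0; have := B0_min B Bin.
  by move: ellB0; rewrite ell_diff; lra.
have [D diff_D] := cone01_const_off_facet facet cone_diff diff0.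
exists [:: ell B0; ell B0 + D]; split=> // _ [B Bin ->]; rewrite !inE -/(ell B).
have [ellB0|ellB_neq0] := ell B =P 0; last by rewrite ell_diff diff_D ?eqxx ?orbT.
by rewrite ell_diff (diff0 B Bin ellB0) addr0 eqxx.
Qed.
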